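(* Let $\boldsymbol\mu=(\mu_0,\dots,\mu_K)\in\mathcal L$ be a single-population instance in which every arm $a$ has distribution $\mathcal N(\mu_a,\sigma^2)$ with known variance $\sigma^2>0$, arm $0$ being the control. Define $\widetilde{\boldsymbol\mu}$ by $\widetilde\mu_k=2\mu_0-\mu_k$ if $\mu_k>\mu_0$ and $\widetilde\mu_k=\mu_k$ otherwise ($k=0,\dots,K$). Then $T^\star(\boldsymbol\mu)=T^\star_{\mathrm{BAI}}(\widetilde{\boldsymbol\mu})$.
   Context: For Gaussian arms with variance $\sigma^2$, $d(x,y)=(x-y)^2/(2\sigma^2)$. $\Sigma_{K+1}$ is the probability simplex. $\mathcal S(\boldsymbol\mu)=\{a\in[K]:\mu_a>\mu_0\}$, $\mathcal L=\{\boldsymbol\mu\in\mathbb R^{K+1}:\mu_a\neq\mu_0\ \forall a\in[K]\}$, $\mathrm{Alt}(\boldsymbol\mu)=\{\boldsymbol\lambda\in\mathcal L:\mathcal S(\boldsymbol\lambda)\neq\mathcal S(\boldsymbol\mu)\}$, and the (all-arms-better-than-control) characteristic time is $T^\star(\boldsymbol\mu)^{-1}=\sup_{\mathbf w\in\Sigma_{K+1}}\inf_{\boldsymbol\lambda\in\mathrm{Alt}(\boldsymbol\mu)}\sum_{a=0}^Kw_a d(\mu_a,\lambda_a)$. For a vector $\boldsymbol\nu\in\mathbb R^{K+1}$ with a unique maximal coordinate, the best-arm-identification characteristic time is $T^\star_{\mathrm{BAI}}(\boldsymbol\nu)^{-1}=\sup_{\mathbf w\in\Sigma_{K+1}}\inf_{\boldsymbol\lambda\in\mathbb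 R^{K+1}:\ \operatorname{argmax}\boldsymbol\lambda\neq\operatorname{argmax}\boldsymbol\nu}\sum_{a=0}^Kw_a d(\nu_a,\lambda_a)$, where the infimum is over $\boldsymbol\lambda$ whose set of maximizing coordinates is not $\{\operatorname{argmax}\boldsymbol\nu\}$. *)

From HB Require Import structures.
From mathcomp Require Import all_boot all_order all_algebra.
From mathcomp Require Import all_classical all_reals all_analysis.
Set Implicit Arguments. Unset Strict Implicit. Unset Printing Implicit Defensive.
Import Order.TTheory GRing.Theory Num.Theory.
Local Open Scope classical_set_scope.
Local Open Scope ring_scope.

Section Defs.
Variables (R : realType) (K : nat).
Notation arm := 'I_K.+1.  (* arms 0..K, arm 0 = control (ord0) *)

Definition gauss_kl (sigma x y : R) : R := (x - y) ^+ 2 / (2 * sigma ^+ 2).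

Definition simplex : set (arm -> R) :=
  [set w | (forall a, 0 <= w a) /\ \sum_(a : arm) w a = 1].

Definition better_set (mu : arm -> R) : {set arm} :=
  [set a : arm | (a != ord0) && (mu ord0 < mu a)].

Definition inL (mu : arm -> R) : Prop := forall a : arm, a != ord0 -> mu a != mu ord0.

Definition Alt (mu : arm -> R) : set (arm -> R) :=
  [set lam | inL lam /\ better_set lam != better_set mu].

Definition wdiv (sigma : R) (w mu lam : arm -> R) : R :=
  \sum_(a : arm) w a * gauss_kl sigma (mu a) (lam a).

Definition Tstar_inv (sigma : R) (mu : arm -> R) : \bar R :=
  ereal_sup [set ereal_inf [set (wdiv sigma w mu lam)%:E | lam in Alt mu]
            | w in simplex].

Definition argmax_set (nu : arm -> R) : {set arm} :=
  [set a : arm | [forall b : arm, nu b <= nu a]].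

Definition Alt_BAI (nu : arm -> R) : set (arm -> R) :=
  [set lam | argmax_set lam != argmax_set nu].

Definition TstarBAI_inv (sigma : R) (nu : arm -> R) : \bar R :=
  ereal_sup [set ereal_inf [set (wdiv sigma w nu lam)%:E | lam in Alt_BAI nu]
            | w in simplex].

Definition reflect_mu (mu : arm -> R) : arm -> R :=
  fun k => if mu ord0 < mu k then 2 * mu ord0 - mu k else mu k.
End Defs.

(* Reflecting a value about mu_0 is an isometry of the line, so it preserves
   the Gaussian divergence; reflect_mu applies to arm k the reflection chosen
   by the side of mu_k, which puts every other arm strictly below the control.
   An alternative in Alt(mu) puts some arm k on the other side of the control
   than in mu, and keeping only its coordinates 0 and k (the others reverting to
   mu) does not increase the cost.  Reflecting these two coordinates with the
   reflection of arm k turns "k changes side" into "lam_k >= lam_0", i.e. an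
   alternative to mu~ whose best arm is not the control alone, at the same
   cost.  Conversely, a BAI alternative to mu~ has some k with lam_k >= lam_0;
   reflecting back and pushing lam_0 down and lam_k up by a small d removes
   the ties forbidden in L at an arbitrarily small extra cost.  Hence the
   inner infima agree for every weight vector. *)
From HB Require Import structures.
From mathcomp Require Import all_boot all_order all_algebra.
From mathcomp Require Import all_classical all_reals all_analysis.
From mathcomp Require Import ring lra.
Set Implicit Arguments. Unset Strict Implicit. Unset Printing Implicit Defensive.
Import Order.TTheory GRing.Theory Num.Theory numFieldNormedType.Exports.
Local Open Scope classical_set_scope.
Local Open Scope ring_scope.

Section Mirror.
Variable R : realDomainType.

Definition mirror (b : bool) (m x : R) : R := if b then 2 * m - x else x.

Lemma mirrorK b m : involutive (mirror b m).
Proof. by case: b => x; rewrite /mirror //; ring. Qed.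

Lemma mirror_inj b m : injective (mirror b m).
Proof. exact: inv_inj (mirrorK b m). Qed.

Lemma mirror_fix b m : mirror b m m = m.
Proof. by case: b; rewrite /mirror //; ring. Qed.

Lemma mirrorB_sqr b m x y : (mirror b m x - mirror b m y) ^+ 2 = (x - y) ^+ 2.
Proof. by case: b; rewrite /mirror //; ring. Qed.

Lemma mirror_ltE b m x y : x != y -> (mirror b m x < mirror b m y) = (x < y) (+) b.
Proof.
move=> xy; case: b; rewrite /mirror ?addbF ?addbT //.
by rewrite ltrD2l ltrN2 ltNge le_eqVlt (negbTE xy).
Qed.

End Mirror.

Lemma near_right_subr_neq (R : realFieldType) (x c : R) :
  \forall d \near (0 : R)^'+, x - d != c.
Proof.
have [xc|cx] := leP x c; near=> d.
- have d_gt0 : 0 < d by near: d; exact: nbhs_right_gt.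
  by rewrite lt_eqF //; lra.
- have d_lt : d < x - c by near: d; apply: nbhs_right_lt; rewrite subr_gt0.
  by rewrite gt_eqF //; lra.
Unshelve. all: by end_near.
Qed.

Lemma ereal_inf_le_approx (R : realType) (T U : Type) (A : set T) (B : set U)
    (f : T -> R) (g : U -> R) :
  (forall a, A a -> forall e, 0 < e -> exists2 b, B b & g b <= f a + e) ->
  (ereal_inf [set (g b)%:E | b in B] <= ereal_inf [set (f a)%:E | a in A])%E.
Proof.
move=> approx; apply: le_ereal_inf_tmp => _ [a Aa <-].
apply/lee_addgt0Pr => e e_gt0; have [b Bb gbe] := approx a Aa e e_gt0.
by apply: ge_ereal_inf; exists (g b)%:E; [exists b | rewrite -EFinD lee_fin].
Qed.

Section Gauss.
Variable R : realType.

Lemma gauss_kl_ge0 (sigma x y : R) : 0 <= gauss_kl sigma x y.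
Proof. by rewrite /gauss_kl divr_ge0 ?sqr_ge0 // mulr_ge0 // sqr_ge0. Qed.

Lemma gauss_kl_xx (sigma x : R) : gauss_kl sigma x x = 0.
Proof. by rewrite /gauss_kl subrr expr0n mul0r. Qed.

Lemma gauss_kl_mirror (sigma : R) b m x y :
  gauss_kl sigma (mirror b m x) (mirror b m y) = gauss_kl sigma x y.
Proof. by rewrite /gauss_kl mirrorB_sqr. Qed.

Lemma cvg_gauss_kl (T : Type) (F : set_system T) {FF : Filter F} (sigma x y : R)
    (f : T -> R) :
  f @ F --> y -> gauss_kl sigma x (f t) @[t --> F] --> gauss_kl sigma x y.
Proof.
move=> fy; apply: cvgMr_tmp; rewrite expr2.
by apply: (cvgM (f := fun t => x - f t) (g := fun t => x - f t));
  apply: cvgB => //; exact: cvg_cst.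
Qed.

End Gauss.

Section Arms.
Variables (R : realType) (K : nat).
Notation arm := 'I_K.+1.
Implicit Types (sigma : R) (w f mu lam : arm -> R).

Definition upd0k f (k : arm) (x y : R) : arm -> R :=
  fun a => if a == ord0 then x else if a == k then y else f a.

Definition pair_cost sigma w f (k : arm) (x y : R) : R :=
  w ord0 * gauss_kl sigma (f ord0) x + w k * gauss_kl sigma (f k) y.

Lemma wdiv_upd0k sigma w f k x y : k != ord0 ->
  wdiv sigma w f (upd0k f k x y) = pair_cost sigma w f k x y.
Proof.
move=> k0; rewrite /wdiv (bigD1 ord0) // (bigD1 k) //= big1 => [|a /andP[a0 ak]].
  by rewrite /upd0k eqxx (negbTE k0) eqxx addr0.
by rewrite /upd0k (negbTE a0) (negbTE ak) gauss_kl_xx mulr0.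
Qed.

Lemma pair_cost_le_wdiv sigma w f lam k : (forall a, 0 <= w a) -> k != ord0 ->
  pair_cost sigma w f k (lam ord0) (lam k) <= wdiv sigma w f lam.
Proof.
move=> w_ge0 k0; rewrite /wdiv (bigD1 ord0) // (bigD1 k) //= addrA lerDl.
by apply: sumr_ge0 => a _; rewrite mulr_ge0 ?gauss_kl_ge0.
Qed.

Lemma reflect_mu_ctrl mu : reflect_mu mu ord0 = mu ord0.
Proof. by rewrite /reflect_mu ltxx. Qed.

Lemma reflect_mu_lt_ctrl mu : inL mu ->
  forall k, k != ord0 -> reflect_mu mu k < reflect_mu mu ord0.
Proof.
move=> Lmu k k0; have := Lmu k k0; rewrite reflect_mu_ctrl /reflect_mu.
by case: (ltgtP (mu ord0) (mu k)) => //= lt_k _; lra.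
Qed.

Lemma pair_cost_mirror sigma w mu k x y :
  let b := mu ord0 < mu k in
  pair_cost sigma w mu k (mirror b (mu ord0) x) (mirror b (mu ord0) y) =
  pair_cost sigma w (reflect_mu mu) k x y.
Proof.
move=> b; rewrite /pair_cost reflect_mu_ctrl.
rewrite -(gauss_kl_mirror sigma b (mu ord0) (mu ord0)) mirror_fix mirrorK.
by rewrite -(gauss_kl_mirror sigma b (mu ord0) (mu k)) mirrorK.
Qed.

Lemma argmax_set_ctrl f : (forall k, k != ord0 -> f k < f ord0) ->
  argmax_set f = [set ord0]%SET.
Proof.
move=> lt_ctrl; apply/setP => a; rewrite !inE; apply/forallP/eqP => [max_a|->].
- apply/eqP; apply: contraT => a0.
  by have := max_a ord0; rewrite leNgt lt_ctrl.
- by move=> b; have [->|b0] := eqVneq b ord0; [exact: lexx | exact/ltW/lt_ctrl].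
Qed.

Lemma Alt_BAI_reflect_muP mu lam : inL mu ->
  Alt_BAI (reflect_mu mu) lam <-> exists2 k, k != ord0 & lam ord0 <= lam k.
Proof.
move=> Lmu; rewrite /Alt_BAI /= (argmax_set_ctrl (reflect_mu_lt_ctrl Lmu)); split.
- move=> /negP; apply: contra_notP => no_k; apply/eqP/argmax_set_ctrl => k k0.
  by rewrite ltNge; apply/negP => le_k; apply: no_k; exists k.
- move=> [k k0 le_k]; apply/eqP => argmax0.
  have /[!inE]/forallP max0 : ord0 \in argmax_set lam by rewrite argmax0 inE.
  have : k \in argmax_set lam by rewrite inE; apply/forallP => b; exact: le_trans le_k.
  by rewrite argmax0 inE (negbTE k0).
Qed.

Lemma better_set_neq lam mu : better_set lam != better_set mu ->
  exists2 k, k != ord0 & (lam ord0 < lam k) != (mu ord0 < mu k).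
Proof.
move=> neq; have /existsP[k] : [exists k, (k \in better_set lam) != (k \in better_set mu)].
  rewrite -negb_forall; apply: contra neq => /forallP eq_k.
  by apply/eqP/setP => k; apply/eqP/eq_k.
by rewrite !inE; have [->|k0] := eqVneq k ord0; last by exists k.
Qed.

Lemma Alt_upd0k_mirror mu k x y : k != ord0 -> x < y ->
  let b := mu ord0 < mu k in
  (forall a, x != mirror b (mu ord0) (mu a)) ->
  Alt mu (upd0k mu k (mirror b (mu ord0) x) (mirror b (mu ord0) y)).
Proof.
move=> k0 lt_xy b x_new; have xy : x != y by rewrite lt_eqF.
split.
- move=> a a0; rewrite /upd0k (negbTE a0) eqxx.
  case: ifP => _; first by rewrite (inj_eq (@mirror_inj _ _ _)) eq_sym.
  by rewrite -(inj_eq (@mirror_inj _ b (mu ord0))) mirrorK eq_sym.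
- apply/eqP => /setP/(_ k); rewrite !inE k0 /upd0k eqxx (negbTE k0) eqxx.
  by rewrite mirror_ltE // lt_xy -/b; case: (b).
Qed.

Lemma Alt_to_Alt_BAI sigma w mu lam : inL mu -> (forall a, 0 <= w a) -> Alt mu lam ->
  exists2 lam', Alt_BAI (reflect_mu mu) lam' &
    wdiv sigma w (reflect_mu mu) lam' <= wdiv sigma w mu lam.
Proof.
move=> Lmu w_ge0 [Llam /better_set_neq[k k0 flip]].
set b := mu ord0 < mu k; set m := mu ord0.
exists (upd0k (reflect_mu mu) k (mirror b m (lam ord0)) (mirror b m (lam k))).
  apply/(Alt_BAI_reflect_muP _ Lmu); exists k => //.
  rewrite /upd0k eqxx (negbTE k0) eqxx ltW // mirror_ltE -?negb_eqb //.
  by rewrite eq_sym Llam.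
rewrite wdiv_upd0k // -pair_cost_mirror !mirrorK.
exact: pair_cost_le_wdiv.
Qed.

Lemma Alt_BAI_to_Alt sigma w mu lam' e : inL mu -> (forall a, 0 <= w a) ->
  Alt_BAI (reflect_mu mu) lam' -> 0 < e ->
  exists2 lam, Alt mu lam &
    wdiv sigma w mu lam <= wdiv sigma w (reflect_mu mu) lam' + e.
Proof.
move=> Lmu w_ge0 /(Alt_BAI_reflect_muP _ Lmu)[k k0 le_k] e_gt0.
set b := mu ord0 < mu k; set m := mu ord0.
pose cost d := pair_cost sigma w (reflect_mu mu) k (lam' ord0 - d) (lam' k + d).
have cost_cvg : cost d @[d --> 0^'+] --> cost 0.
  apply: cvg_at_right_filter; apply: cvgD; apply: cvgMl_tmp; apply: cvg_gauss_kl.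
  - by apply: cvgB; [exact: cvg_cst | exact: cvg_id].
  - by apply: cvgD; [exact: cvg_cst | exact: cvg_id].
have /filter_ex[d [d_gt0 d_new d_close]] : \forall d \near 0^'+, [/\ 0 < d,
    forall a, lam' ord0 - d != mirror b m (mu a) & cost d < cost 0 + e].
  near=> d; split.
  - by near: d; exact: nbhs_right_gt.
  - by near: d; apply: filter_forall => a; exact: near_right_subr_neq.
  - by near: d; apply: cvgr_lt cost_cvg _ _; rewrite ltrDl.
exists (upd0k mu k (mirror b m (lam' ord0 - d)) (mirror b m (lam' k + d))).
  by apply: Alt_upd0k_mirror => //; lra.
rewrite wdiv_upd0k // pair_cost_mirror; apply: le_trans (ltW d_close) _.
by rewrite lerD2r /cost subr0 addr0; exact: pair_cost_le_wdiv.
Unshelve. all: by end_near.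
Qed.

End Arms.

Theorem lemma1 (R : realType) (K : nat) (sigma : R) (mu : 'I_K.+1 -> R) :
  0 < sigma -> inL mu ->
  Tstar_inv sigma mu = TstarBAI_inv sigma (reflect_mu mu).
Proof.
move=> _ Lmu; rewrite /Tstar_inv /TstarBAI_inv; congr ereal_sup.
apply: eq_imagel => w [w_ge0 _]; apply/eqP; rewrite eq_le; apply/andP; split.
- apply: ereal_inf_le_approx => lam' alt' e e_gt0.
  exact: Alt_BAI_to_Alt.
- apply: ereal_inf_le_approx => lam alt e e_gt0.
  have [lam' alt' le_cost] := Alt_to_Alt_BAI sigma Lmu w_ge0 alt.
  by exists lam' => //; rewrite ler_wpDr // ltW.
Qed.
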